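(* Let $n\ge2$, $0<R<\sqrt{\tfrac38(3n-5)(2n-3)^3}$, let $u_0$ satisfy (C1)–(C6), and let $\lambda>0$ with $\lambda R<x_1$. Then there is $C>0$ such that $v(r,t):=Ce^{-\lambda^2t}r^{n-\frac32}J_\nu(\lambda r)$ satisfies $u_0\ge u^*-v(\cdot,0)$ in $B_R$.
   Context: $B_R=\{x\in\mathbb R^n:|x|<R\}$; radial functions written in $r=|x|$, subscript $r$ = radial derivative. $\alpha:=\sqrt[3]{9n-15}$, $u^*(r):=-\alpha r^{1/3}$, $\nu:=\tfrac16\sqrt{36n^2-96n+61}$, $J_\nu$ the Bessel function of the first kind of order $\nu$; $x_0>0$, $x_1\in(0,x_0)$ the first positive roots of $J_\nu$ and $J_\nu'$. Conditions on $u_0$: (C1) $u_0\in C^2(\overline{B_R}\setminus\{0\})$; (C2) $u_0$ radially symmetric; (C3) $u^*\ge u_0$; (C4) $\limsup_{r\searrow0}|r^{\frac32-n-\nu}(u^*(r)-u_0(r))|<\infty$; (C5) $u_0(R)=u^*(R)$; (C6) there is $C>0$ with $0\ge u_{0r}(r)\ge -Cr^{-2/3}$ for all $r\in(0,R)$. *)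

From Stdlib Require Import Reals Lra Lia ClassicalEpsilon Factorial.
Open Scope R_scope.

Definition the_real (P : R -> Prop) : R := epsilon (inhabits 0) P.

Fixpoint rprod (s : R) (m : nat) : R :=
  match m with
  | O => s
  | S k => rprod s k * (s + INR (S k))
  end.

(* Euler Gamma function (for s > 0) via Gauss' limit formula
   Gamma(s) = lim_m m! m^s / (s (s+1) ... (s+m)). *)
Definition Gamma (s : R) : R :=
  the_real (fun l => Un_cv (fun m => INR (fact m) * Rpower (INR m) s / rprod s m) l).

(* Bessel function of the first kind of real order nu, for x > 0:
   J_nu(x) = sum_k (-1)^k / (k! Gamma(k+nu+1)) (x/2)^(2k+nu). *)
Definition BesselJ (nu x : R) : R :=
  Rpower (x / 2) nu *
  the_real (fun l => infinite_sum
    (fun k => (-1) ^ k * (x / 2) ^ (2 * k) / (INR (fact k) * Gamma (INR k + nu + 1))) l).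

Definition alpha (n : nat) : R := Rpower (9 * INR n - 15) (1/3).
Definition ustar (n : nat) (r : R) : R := - alpha n * Rpower r (1/3).
Definition nu (n : nat) : R := sqrt (36 * INR n ^ 2 - 96 * INR n + 61) / 6.

Definition first_pos_root_deriv (f : R -> R) (x1 : R) : Prop :=
  0 < x1 /\ derivable_pt_lim f x1 0 /\
  (forall y, 0 < y < x1 -> exists l, derivable_pt_lim f y l) /\
  (forall y, 0 < y < x1 -> ~ derivable_pt_lim f y 0).

Definition cont_within (D : R -> Prop) (f : R -> R) (x : R) : Prop :=
  limit1_in f D (f x) x.

(* (C1) for the radial profile: u0 is C^2 on (0,R), with u0, u0', u0''
   extending continuously to (0,R]  (i.e. C^2 on closure(B_R)\{0}).
   u1 is the radial derivative u_{0r}. *)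
Definition C1_profile (Rr : R) (u0 u1 : R -> R) : Prop :=
  exists u2 : R -> R,
    (forall r, 0 < r < Rr -> derivable_pt_lim u0 r (u1 r)) /\
    (forall r, 0 < r < Rr -> derivable_pt_lim u1 r (u2 r)) /\
    (forall r, 0 < r <= Rr ->
       cont_within (fun y => 0 < y <= Rr) u0 r /\
       cont_within (fun y => 0 < y <= Rr) u1 r /\
       cont_within (fun y => 0 < y <= Rr) u2 r).

From Stdlib Require Import Reals Lra Lia ClassicalEpsilon Factorial.
From Coquelicot Require Import Coquelicot.
Open Scope R_scope.

(* Write [w := u* - u0] and [phi r := r^(n-3/2) J_nu(lambda r)]; we need [w <= C phi] on (0,R).
   Gauss' product shows [Gamma] is bounded below, so the Bessel series equals [1/Gamma(nu+1) > 0]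
   up to an O(x^2) tail and [J_nu(x)] is comparable to [(x/2)^nu] near 0.  Hence
   [phi r] is comparable to [r^(n-3/2+nu)], which dominates [w] near 0 by (C4).  A sign change of
   [J_nu] before [x1] would create an interior maximum, i.e. a critical point, so [phi > 0] on
   (0,R] and is bounded below on [delta,R], where [w <= -u*(R)] since [u0] is nonincreasing and
   [u0(R) = u*(R)]. *)

Lemma the_real_unique (P : R -> Prop) (l : R) :
  P l -> (forall l', P l' -> l' = l) -> the_real P = l.
Proof. intros Hl Huniq. apply Huniq. unfold the_real. apply epsilon_spec. now exists l. Qed.

Lemma Rpower_pos (x y : R) : 0 < Rpower x y.
Proof. apply exp_pos. Qed.

Lemma exp_le_compat (x y : R) : x <= y -> exp x <= exp y.
Proof.
  intro Hxy. destruct (Rle_lt_or_eq_dec _ _ Hxy) as [Hlt|Heq].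
  - left. now apply exp_increasing.
  - right. now rewrite Heq.
Qed.

Lemma ln_le_minus_one (y : R) : 0 < y -> ln y <= y - 1.
Proof. intro Hy. pose proof (exp_ineq1_le (ln y)) as H. rewrite exp_ln in H; lra. Qed.

Lemma ln_diff_bounds (a b : R) :
  0 < a -> a <= b -> (b - a) / b <= ln b - ln a <= (b - a) / a.
Proof.
  intros Ha Hab.
  assert (Hdiv : forall x y, 0 < x -> 0 < y -> ln (x / y) = ln x - ln y).
  { intros x y Hx Hy. unfold Rdiv. rewrite ln_mult, ln_Rinv; auto with real. }
  pose proof (ln_le_minus_one (a / b) ltac:(apply Rdiv_lt_0_compat; lra)) as Hab'.
  pose proof (ln_le_minus_one (b / a) ltac:(apply Rdiv_lt_0_compat; lra)) as Hba.
  rewrite Hdiv in Hab', Hba by lra.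
  replace (a / b - 1) with (- ((b - a) / b)) in Hab' by (field; lra).
  replace (b / a - 1) with ((b - a) / a) in Hba by (field; lra).
  lra.
Qed.

Lemma rprod_pos (s : R) (m : nat) : 0 < s -> 0 < rprod s m.
Proof.
  intro Hs. induction m as [|m IH]; [exact Hs|].
  change (rprod s (S m)) with (rprod s m * (s + INR (S m))).
  apply Rmult_lt_0_compat; [exact IH|]. pose proof (pos_INR (S m)). lra.
Qed.

Definition gauss_seq (s : R) (m : nat) : R :=
  INR (fact m) * Rpower (INR m) s / rprod s m.

Lemma gauss_seq_pos (s : R) (m : nat) : 0 < s -> 0 < gauss_seq s m.
Proof.
  intro Hs. apply Rdiv_lt_0_compat; [|now apply rprod_pos].
  apply Rmult_lt_0_compat; [apply lt_0_INR, lt_O_fact | apply Rpower_pos].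
Qed.

Lemma gauss_seq_1 (s : R) : 0 < s -> gauss_seq s 1 = / (s * (s + 1)).
Proof. intro Hs. unfold gauss_seq, Rpower. simpl. rewrite ln_1, Rmult_0_r, exp_0. field. lra. Qed.

Definition gauss_ratio (s a : R) : R := exp (s * (ln (a + 1) - ln a)) * ((a + 1) / (s + a + 1)).

Lemma gauss_seq_S (s : R) (m : nat) : 0 < s ->
  gauss_seq s (S (S m)) = gauss_seq s (S m) * gauss_ratio s (INR (S m)).
Proof.
  intro Hs. unfold gauss_seq, gauss_ratio, Rpower.
  change (rprod s (S (S m))) with (rprod s (S m) * (s + INR (S (S m)))).
  rewrite fact_simpl, mult_INR, (S_INR (S m)).
  pose proof (rprod_pos s (S m) Hs). pose proof (pos_INR (S m)).
  replace (s * ln (INR (S m) + 1))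
    with (s * ln (INR (S m)) + s * (ln (INR (S m) + 1) - ln (INR (S m)))) by ring.
  rewrite exp_plus. field. split; lra.
Qed.

Lemma gauss_ratio_bounds (s a : R) : 0 < s -> 1 <= a ->
  1 <= gauss_ratio s a <= exp (s * (s + 1) * (/ a - / (a + 1))).
Proof.
  intros Hs Ha. unfold gauss_ratio.
  destruct (ln_diff_bounds a (a + 1)) as [Hlo Hhi]; [lra|lra|].
  split.
  - (* exp x >= 1 + x together with ln (1 + 1/a) >= 1/(a+1) *)
    apply Rle_trans with ((1 + s * ((a + 1 - a) / (a + 1))) * ((a + 1) / (s + a + 1))).
    + right. field. lra.
    + apply Rmult_le_compat_r; [apply Rlt_le, Rdiv_lt_0_compat; lra|].
      eapply Rle_trans; [|apply exp_ineq1_le]. apply Rplus_le_compat_l, Rmult_le_compat_l; lra.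
  - destruct (ln_diff_bounds (a + 1) (s + a + 1)) as [Hlo' _]; [lra|lra|].
    replace ((a + 1) / (s + a + 1)) with (exp (- (ln (s + a + 1) - ln (a + 1)))).
    2: { unfold Rminus. rewrite Ropp_plus_distr, Ropp_involutive, exp_plus, exp_Ropp, !exp_ln by lra.
      field. lra. }
    rewrite <- exp_plus. apply exp_le_compat.
    apply Rle_trans with (s * ((a + 1 - a) / a) - (s + a + 1 - (a + 1)) / (s + a + 1)).
    + apply Rplus_le_compat; [apply Rmult_le_compat_l|]; lra.
    + replace (s * ((a + 1 - a) / a) - (s + a + 1 - (a + 1)) / (s + a + 1))
        with (s * (s + 1) / (a * (s + a + 1))) by (field; lra).
      replace (s * (s + 1) * (/ a - / (a + 1))) with (s * (s + 1) / (a * (a + 1))) by (field; lra).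
      apply Rmult_le_compat_l; [nra|]. apply Rinv_le_contravar; nra.
Qed.

Lemma INR_S_ge_1 (m : nat) : 1 <= INR (S m).
Proof. rewrite S_INR. pose proof (pos_INR m). lra. Qed.

Lemma gauss_seq_growing (s : R) : 0 < s -> Un_growing (fun m => gauss_seq s (S m)).
Proof.
  intros Hs m. rewrite gauss_seq_S by exact Hs.
  destruct (gauss_ratio_bounds s (INR (S m)) Hs (INR_S_ge_1 m)) as [Hge1 _].
  pose proof (gauss_seq_pos s (S m) Hs). nra.
Qed.

Lemma gauss_seq_le (s : R) (m : nat) : 0 < s ->
  gauss_seq s (S m) <= gauss_seq s 1 * exp (s * (s + 1) * (1 - / INR (S m))).
Proof.
  intro Hs. induction m as [|m IH].
  - replace (1 - / INR 1) with 0 by (simpl; field). rewrite Rmult_0_r, exp_0. lra.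
  - rewrite gauss_seq_S by exact Hs.
    destruct (gauss_ratio_bounds s (INR (S m)) Hs (INR_S_ge_1 m)) as [Hge1 Hle].
    rewrite <- S_INR in Hle.
    replace (s * (s + 1) * (1 - / INR (S (S m))))
      with (s * (s + 1) * (1 - / INR (S m)) + s * (s + 1) * (/ INR (S m) - / INR (S (S m))))
      by ring.
    rewrite exp_plus, <- Rmult_assoc.
    apply Rmult_le_compat; [now apply Rlt_le, gauss_seq_pos | lra | exact IH | exact Hle].
Qed.

(* Gauss' sequence increases and is bounded, so [Gamma s] is its limit. *)
Lemma Gamma_ge (s : R) : 0 < s -> / (s * (s + 1)) <= Gamma s.
Proof.
  intro Hs. set (u := fun m => gauss_seq s (S m)).
  assert (Hbounded : has_ub u).
  { exists (gauss_seq s 1 * exp (s * (s + 1))). intros y [m ->]. unfold u.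
    eapply Rle_trans; [now apply gauss_seq_le|].
    apply Rmult_le_compat_l; [now apply Rlt_le, gauss_seq_pos|].
    apply exp_le_compat. pose proof (INR_S_ge_1 m).
    assert (0 < / INR (S m)) by (apply Rinv_0_lt_compat; lra).
    assert (0 < s * (s + 1)) by nra. nra. }
  destruct (growing_cv u (gauss_seq_growing s Hs) Hbounded) as [l Hl].
  assert (Hcv : Un_cv (gauss_seq s) l).
  { apply (CV_shift _ 1). intros e He. destruct (Hl e He) as [N HN].
    exists N. intros k Hk. rewrite Nat.add_1_r. apply HN. lia. }
  replace (Gamma s) with l.
  2: { symmetry. apply the_real_unique; [exact Hcv|]. intros l' H'. exact (UL_sequence _ _ _ H' Hcv). }
  rewrite <- (gauss_seq_1 s Hs). exact (growing_ineq u l (gauss_seq_growing s Hs) Hl 0).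
Qed.

Lemma fact_quadratic_bound (k : nat) : (1 <= k)%nat -> (k * (k + 1) <= 3 * fact k)%nat.
Proof.
  induction k as [|k IH]; [lia|]. intros _. rewrite fact_simpl.
  destruct (Nat.eq_dec k 0) as [->|Hk]; [simpl; lia|].
  specialize (IH ltac:(lia)). nia.
Qed.

Lemma shifted_quadratic_le_fact (nu : R) (k : nat) : 0 <= nu ->
  (INR k + nu + 1) * (INR k + nu + 1 + 1) <= 3 * (nu + 2) ^ 2 * INR (fact k).
Proof.
  intro Hnu. destruct k as [|k]; [simpl; nra|].
  pose proof (le_INR _ _ (fact_quadratic_bound (S k) ltac:(lia))) as Hfact.
  rewrite !mult_INR, plus_INR in Hfact. simpl (INR 1) in Hfact. simpl (INR 3) in Hfact.
  pose proof (INR_S_ge_1 k) as Hk.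
  apply Rle_trans with ((nu + 2) ^ 2 * (INR (S k) * (INR (S k) + 1))); [|nra].
  replace ((nu + 2) ^ 2 * (INR (S k) * (INR (S k) + 1)))
    with ((INR (S k) * (nu + 2)) * ((INR (S k) + 1) * (nu + 2))) by ring.
  apply Rmult_le_compat; nra.
Qed.

Definition bessel_term (nu x : R) (k : nat) : R :=
  (-1) ^ k * (x / 2) ^ (2 * k) / (INR (fact k) * Gamma (INR k + nu + 1)).

Lemma BesselJ_series (nu x : R) :
  BesselJ nu x = Rpower (x / 2) nu * the_real (fun l => infinite_sum (bessel_term nu x) l).
Proof. reflexivity. Qed.

Lemma Rabs_bessel_term_le (nu x : R) (k : nat) : 0 <= nu ->
  Rabs (bessel_term nu x k) <= 3 * (nu + 2) ^ 2 * ((x / 2) ^ 2) ^ k.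
Proof.
  intro Hnu. unfold bessel_term. set (s := INR k + nu + 1).
  assert (Hs : 1 <= s) by (unfold s; pose proof (pos_INR k); lra).
  pose proof (Gamma_ge s ltac:(lra)) as Hgamma.
  assert (Hfact : 0 < INR (fact k)) by apply lt_0_INR, lt_O_fact.
  assert (Hinv : 0 < / (s * (s + 1))) by (apply Rinv_0_lt_compat; nra).
  assert (Hgpos : 0 < Gamma s) by lra.
  rewrite <- pow_mult. set (y := (x / 2) ^ (2 * k)).
  assert (Hy : 0 <= y) by (unfold y; rewrite pow_mult; apply pow_le, pow2_ge_0).
  unfold Rdiv. rewrite !Rabs_mult, pow_1_abs, Rmult_1_l, Rabs_inv, Rabs_mult.
  rewrite !Rabs_pos_eq by lra. rewrite Rmult_comm.
  apply Rmult_le_compat_r; [exact Hy|].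
  apply Rle_trans with (s * (s + 1) / INR (fact k)).
  - rewrite Rinv_mult, Rmult_comm. unfold Rdiv. apply Rmult_le_compat_r; [auto with real|].
    replace (s * (s + 1)) with (/ / (s * (s + 1))) by (field; nra).
    apply Rinv_le_contravar; lra.
  - pose proof (shifted_quadratic_le_fact nu k Hnu) as Hq. fold s in Hq.
    apply (Rmult_le_reg_r (INR (fact k))); [exact Hfact|].
    unfold Rdiv. rewrite Rmult_assoc, Rinv_l by lra. lra.
Qed.

Lemma ex_series_geom_scal (c q : R) : 0 <= q < 1 -> ex_series (fun k => c * q ^ k).
Proof.
  intro Hq. apply (ex_series_scal_l c (fun k => q ^ k)).
  apply ex_series_geom. rewrite Rabs_right; lra.
Qed.

(* For [(x/2)^2 <= 1/2] the series is its constant term up to a geometric tail. *)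
Lemma bessel_series_near_head (nu x : R) : 0 <= nu -> (x / 2) ^ 2 <= 1 / 2 ->
  Rabs (the_real (fun l => infinite_sum (bessel_term nu x) l) - / Gamma (nu + 1))
  <= 6 * (nu + 2) ^ 2 * (x / 2) ^ 2.
Proof.
  intros Hnu Hq. set (q := (x / 2) ^ 2) in *. set (B := 3 * (nu + 2) ^ 2).
  assert (Hq0 : 0 <= q) by apply pow2_ge_0.
  assert (HB : 0 <= B) by (unfold B; nra).
  pose proof (fun k => Rabs_bessel_term_le nu x k Hnu) as Hterm. fold q B in Hterm.
  assert (Habs : ex_series (fun k => Rabs (bessel_term nu x k))).
  { apply (@ex_series_le R_AbsRing R_CompleteNormedModule _ (fun k => B * q ^ k));
      [|apply ex_series_geom_scal; lra].
    intro k. change (norm (Rabs (bessel_term nu x k))) with (Rabs (Rabs (bessel_term nu x k))).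
    rewrite Rabs_Rabsolu. apply Hterm. }
  assert (Hex : ex_series (bessel_term nu x)) by now apply ex_series_Rabs.
  assert (Hsum : the_real (fun l => infinite_sum (bessel_term nu x) l) = Series (bessel_term nu x)).
  { apply the_real_unique; [now apply is_series_Reals, Series_correct|].
    intros l' H'. apply (uniqueness_sum (bessel_term nu x)); [exact H'|].
    now apply is_series_Reals, Series_correct. }
  assert (Hhead : bessel_term nu x 0 = / Gamma (nu + 1)).
  { pose proof (Gamma_ge (nu + 1) ltac:(lra)) as Hgamma.
    assert (0 < / ((nu + 1) * (nu + 1 + 1))) by (apply Rinv_0_lt_compat; nra).
    unfold bessel_term. simpl. replace (0 + nu + 1) with (nu + 1) by ring. field. lra. }
  rewrite Hsum, Series_incr_1, Hhead by exact Hex.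
  replace (/ Gamma (nu + 1) + Series (fun k => bessel_term nu x (S k)) - / Gamma (nu + 1))
    with (Series (fun k => bessel_term nu x (S k))) by ring.
  eapply Rle_trans; [apply Series_Rabs, (ex_series_incr_1 (fun k => Rabs (bessel_term nu x k)));
    exact Habs|].
  eapply Rle_trans.
  { apply (Series_le _ (fun k => (B * q) * q ^ k)); [|apply ex_series_geom_scal; lra].
    intro k. split; [apply Rabs_pos|]. rewrite Rmult_assoc, tech_pow_Rmult. apply Hterm. }
  rewrite Series_scal_l, Series_geom by (rewrite Rabs_right; lra).
  replace (6 * (nu + 2) ^ 2 * q) with ((B * q) * 2) by (unfold B; ring).
  apply Rmult_le_compat_l; [nra|].
  replace 2 with (/ / 2) by field. apply Rinv_le_contravar; lra.
Qed.

Lemma BesselJ_near0_bounds (nu : R) : 0 <= nu -> exists xs a b, 0 < xs /\ 0 < a /\ 0 < b /\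
  forall x, 0 < x <= xs -> a * Rpower (x / 2) nu <= BesselJ nu x <= b * Rpower (x / 2) nu.
Proof.
  intro Hnu. set (g0 := / Gamma (nu + 1)). set (B := 6 * (nu + 2) ^ 2).
  assert (Hg0 : 0 < g0).
  { pose proof (Gamma_ge (nu + 1) ltac:(lra)) as Hgamma.
    assert (0 < / ((nu + 1) * (nu + 1 + 1))) by (apply Rinv_0_lt_compat; nra).
    apply Rinv_0_lt_compat. lra. }
  assert (HB : 0 < B) by (unfold B; nra).
  set (qs := Rmin (1 / 2) (g0 / (2 * B))).
  assert (Hqs : 0 < qs) by (apply Rmin_glb_lt; [lra|apply Rdiv_lt_0_compat; lra]).
  exists (2 * sqrt qs), (g0 / 2), (3 * g0 / 2).
  split; [pose proof (sqrt_lt_R0 qs Hqs); lra|]. split; [lra|]. split; [lra|].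
  intros x Hx.
  assert (Hq : (x / 2) ^ 2 <= qs).
  { rewrite <- (pow2_sqrt qs) by lra. apply pow_incr. lra. }
  pose proof (bessel_series_near_head nu x Hnu
    ltac:(eapply Rle_trans; [exact Hq|apply Rmin_l])) as Hhead.
  assert (Htail : 6 * (nu + 2) ^ 2 * (x / 2) ^ 2 <= g0 / 2).
  { fold B. apply Rle_trans with (B * (g0 / (2 * B))); [|right; field; lra].
    apply Rmult_le_compat_l; [lra|]. eapply Rle_trans; [exact Hq|apply Rmin_r]. }
  fold g0 in Hhead. apply Rabs_le_between' in Hhead.
  rewrite BesselJ_series. pose proof (Rpower_pos (x / 2) nu). split; nra.
Qed.

Lemma first_pos_root_deriv_continuity (J : R -> R) (x1 : R) :
  first_pos_root_deriv J x1 -> forall c, 0 < c <= x1 -> continuity_pt J c.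
Proof.
  intros [_ [Hx1 [Hd _]]] c Hc.
  destruct (Req_dec c x1) as [->|Hne].
  - apply derivable_continuous_pt. exact (exist _ 0 Hx1).
  - destruct (Hd c ltac:(lra)) as [l Hl]. apply derivable_continuous_pt. exact (exist _ l Hl).
Qed.

Lemma le_max_endpoints_of_noncritical (f : R -> R) (p q : R) : p <= q ->
  (forall z, p <= z <= q -> continuity_pt f z) ->
  (forall z, p < z < q -> exists l, derivable_pt_lim f z l) ->
  (forall z, p < z < q -> ~ derivable_pt_lim f z 0) ->
  forall z, p <= z <= q -> f z <= Rmax (f p) (f q).
Proof.
  intros Hpq Hcont Hd Hnd z Hz.
  destruct (continuity_ab_maj f p q Hpq Hcont) as [c [Hmax Hc]].
  eapply Rle_trans; [exact (Hmax z Hz)|].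
  destruct (Req_dec c p) as [->|Hcp]; [apply Rmax_l|].
  destruct (Req_dec c q) as [->|Hcq]; [apply Rmax_r|].
  exfalso. destruct (Hd c ltac:(lra)) as [l Hl].
  assert (Hzero : derive_pt f c (exist _ l Hl) = 0).
  { apply (deriv_maximum f p q); try lra. intros y Hy1 Hy2. apply Hmax. lra. }
  rewrite (derive_pt_eq_0 f c l _ Hl) in Hzero. subst l. exact (Hnd c ltac:(lra) Hl).
Qed.

Lemma Rpower_small (nu c : R) : 0 < nu -> 0 < c -> exists rho, 0 < rho < 1 /\ Rpower rho nu < c.
Proof.
  intros Hnu Hc. set (t := (Rabs (ln c) + 1) / nu).
  assert (Ht : 0 < t) by (apply Rdiv_lt_0_compat; [pose proof (Rabs_pos (ln c))|]; lra).
  exists (exp (- t)). split; [split; [apply exp_pos|]|].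
  - rewrite <- exp_0. apply exp_increasing. lra.
  - unfold Rpower. rewrite ln_exp, <- (exp_ln c Hc) at 1. apply exp_increasing.
    unfold t. replace (nu * - ((Rabs (ln c) + 1) / nu)) with (- Rabs (ln c) - 1) by (field; lra).
    pose proof (Rle_abs (- ln c)). rewrite Rabs_Ropp in *. lra.
Qed.

(* Near 0, [J] behaves like [(x/2)^nu], which is positive and tends to 0; a sign change
   before [x1] would force an interior maximum, i.e. a critical point. *)
Lemma pos_before_first_critical (J : R -> R) (nu x1 xs a b : R) :
  0 < nu -> 0 < xs -> 0 < a -> 0 < b ->
  (forall x, 0 < x <= xs -> a * Rpower (x / 2) nu <= J x <= b * Rpower (x / 2) nu) ->
  first_pos_root_deriv J x1 -> forall y, 0 < y < x1 -> 0 < J y.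
Proof.
  intros Hnu Hxs Ha Hb HJ Hroot y Hy.
  pose proof Hroot as [Hx1 [_ [Hd Hnd]]].
  set (eta := Rmin xs (x1 / 2)).
  assert (Heta : 0 < eta <= xs /\ eta < x1).
  { unfold eta. repeat split; [apply Rmin_glb_lt; lra|apply Rmin_l|].
    eapply Rle_lt_trans; [apply Rmin_r|lra]. }
  assert (Hpos : forall x, 0 < x <= eta -> 0 < J x).
  { intros x Hx. destruct (HJ x) as [Hlo _]; [lra|].
    pose proof (Rpower_pos (x / 2) nu). nra. }
  destruct (Rle_dec y eta) as [Hye|Hye]; [apply Hpos; lra|].
  destruct (Rlt_le_dec 0 (J y)) as [|HJy]; [assumption|exfalso].
  destruct (Rpower_small nu (a / b) Hnu ltac:(apply Rdiv_lt_0_compat; lra)) as [rho [Hrho Hsmall]].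
  set (eps := rho * eta).
  assert (Heps : 0 < eps < eta) by (unfold eps; nra).
  assert (HJeps : J eps < J eta).
  { destruct (HJ eps) as [_ Hup]; [lra|]. destruct (HJ eta) as [Hlo _]; [lra|].
    replace (Rpower (eps / 2) nu) with (Rpower rho nu * Rpower (eta / 2) nu) in Hup.
    2: { rewrite Rpower_mult_distr by lra. unfold eps. f_equal. field. }
    pose proof (Rpower_pos (eta / 2) nu).
    assert (b * Rpower rho nu < a) by (apply (Rmult_lt_reg_l (/ b)); [auto with real|];
      field_simplify; [|lra|lra]; unfold Rdiv in Hsmall; lra).
    nra. }
  assert (HJeta := Hpos eta ltac:(lra)).
  pose proof (le_max_endpoints_of_noncritical J eps y ltac:(lra)
    ltac:(intros; apply (first_pos_root_deriv_continuity J x1 Hroot); lra)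
    ltac:(intros; apply Hd; lra) ltac:(intros; apply Hnd; lra) eta ltac:(lra)) as Hmax.
  unfold Rmax in Hmax. destruct (Rle_dec (J eps) (J y)); lra.
Qed.

Lemma cont_within_le (D : R -> Prop) (f : R -> R) (x c : R) : cont_within D f x ->
  (forall delta, 0 < delta -> exists y, D y /\ Rabs (y - x) < delta /\ f y <= c) -> f x <= c.
Proof.
  intros Hcont Hnear. destruct (Rle_lt_dec (f x) c) as [|Hlt]; [assumption|exfalso].
  destruct (Hcont (f x - c) ltac:(lra)) as [delta [Hdelta Hball]].
  destruct (Hnear delta Hdelta) as [y [Hy [Hxy Hfy]]].
  specialize (Hball y (conj Hy Hxy)). simpl in Hball. unfold R_dist in Hball.
  apply Rabs_def2 in Hball. lra.
Qed.

Lemma C1_profile_nonincreasing (Rr : R) (u0 u0r : R -> R) : C1_profile Rr u0 u0r ->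
  (forall r, 0 < r < Rr -> u0r r <= 0) -> forall r, 0 < r < Rr -> u0 Rr <= u0 r.
Proof.
  intros [u2 [Hd [_ Hcont]]] Hneg r Hr.
  assert (Hmono : forall y, r < y < Rr -> u0 y <= u0 r).
  { intros y Hy. destruct (MVT_cor2 u0 u0r r y) as [c [Hmvt Hc]]; [lra| |].
    - intros c Hc. apply Hd. lra.
    - pose proof (Hneg c ltac:(lra)). nra. }
  apply (cont_within_le (fun y => 0 < y <= Rr)); [apply Hcont; lra|].
  intros delta Hdelta. set (h := Rmin delta (Rr - r) / 2).
  assert (Hh : 0 < h < delta /\ h < Rr - r).
  { pose proof (Rmin_l delta (Rr - r)). pose proof (Rmin_r delta (Rr - r)).
    assert (0 < Rmin delta (Rr - r)) by (apply Rmin_glb_lt; lra). unfold h. lra. }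
  exists (Rr - h). repeat split; try lra.
  - rewrite Rabs_left; lra.
  - apply Hmono. lra.
Qed.

Lemma nu_pos (n : nat) : (2 <= n)%nat -> 0 < nu n.
Proof.
  intro Hn. apply le_INR in Hn. simpl in Hn.
  apply Rdiv_lt_0_compat; [apply sqrt_lt_R0; nra | lra].
Qed.

Lemma ustar_gap_le (n : nat) (Rr : R) (u0 u0r : R -> R) :
  C1_profile Rr u0 u0r -> (forall r, 0 < r < Rr -> u0r r <= 0) -> u0 Rr = ustar n Rr ->
  forall r, 0 < r < Rr -> ustar n r - u0 r <= - ustar n Rr.
Proof.
  intros HC1 Hneg Hbd r Hr.
  pose proof (C1_profile_nonincreasing Rr u0 u0r HC1 Hneg r Hr).
  assert (ustar n r <= 0).
  { unfold ustar, alpha. pose proof (Rpower_pos (9 * INR n - 15) (1 / 3)).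
    pose proof (Rpower_pos r (1 / 3)). nra. }
  lra.
Qed.

Section ProfileComparison.

Variables (w J : R -> R) (k nv lam Rr : R).
Hypothesis Hlam : 0 < lam.

Lemma le_profile_near0 (e xs a M d : R) :
  e = - k - nv -> 0 < xs -> 0 < a -> 0 < d ->
  (forall x, 0 < x <= xs -> a * Rpower (x / 2) nv <= J x) ->
  (forall r, 0 < r < d -> r <= Rr -> Rabs (Rpower r e * w r) <= M) ->
  exists delta c, 0 < delta /\
    forall r, 0 < r < delta -> r <= Rr -> w r <= c * (Rpower r k * J (lam * r)).
Proof.
  intros He Hxs Ha Hd HJ HM.
  set (delta := Rmin d (xs / lam)).
  assert (Hdelta : 0 < delta) by (apply Rmin_glb_lt; [lra|apply Rdiv_lt_0_compat; lra]).
  set (A := a * Rpower (lam / 2) nv).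
  assert (HA : 0 < A) by (apply Rmult_lt_0_compat; [lra|apply Rpower_pos]).
  exists delta, (Rabs M / A). split; [exact Hdelta|]. intros r Hr HrR.
  assert (Hrd : r < d) by (eapply Rlt_le_trans; [apply Hr|apply Rmin_l]).
  assert (Hrx : lam * r <= xs).
  { assert (r < xs / lam) by (eapply Rlt_le_trans; [apply Hr|apply Rmin_r]).
    apply (Rmult_le_reg_r (/ lam)); [auto with real|]. field_simplify; lra. }
  assert (Hunit : Rpower r e * (Rpower r k * Rpower r nv) = 1).
  { rewrite <- !Rpower_plus, He. replace (- k - nv + (k + nv)) with 0 by ring.
    apply Rpower_O. lra. }
  assert (Hweight : w r = (Rpower r e * w r) * (Rpower r k * Rpower r nv)).
  { transitivity (w r * (Rpower r e * (Rpower r k * Rpower r nv))); [rewrite Hunit|]; ring. }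
  assert (HJr : A * Rpower r nv <= J (lam * r)).
  { replace (A * Rpower r nv) with (a * Rpower (lam * r / 2) nv).
    - apply HJ. split; [nra|exact Hrx].
    - unfold A. rewrite Rmult_assoc, Rpower_mult_distr by lra. do 2 f_equal. field. }
  pose proof (Rpower_pos r k). pose proof (Rpower_pos r nv).
  pose proof (Rle_trans _ _ _ (Rle_abs _) (Rle_trans _ _ _ (HM r (conj (proj1 Hr) Hrd) HrR)
    (Rle_abs M))) as HMr.
  rewrite Hweight.
  apply Rle_trans with (Rabs M * (Rpower r k * Rpower r nv)); [apply Rmult_le_compat_r; nra|].
  replace (Rabs M * (Rpower r k * Rpower r nv)) with (Rabs M / A * Rpower r k * (A * Rpower r nv))
    by (field; lra).
  rewrite Rmult_assoc. apply Rmult_le_compat_l.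
  - apply Rmult_le_pos; [apply Rabs_pos|]. apply Rlt_le, Rinv_0_lt_compat, HA.
  - apply Rmult_le_compat_l; [lra|exact HJr].
Qed.

Lemma le_profile_away (x1 delta K : R) : 0 <= k -> 0 < delta -> lam * Rr < x1 ->
  (forall c, 0 < c <= x1 -> continuity_pt J c) -> (forall y, 0 < y < x1 -> 0 < J y) ->
  (forall r, delta <= r < Rr -> w r <= K) ->
  exists c, forall r, delta <= r < Rr -> w r <= c * (Rpower r k * J (lam * r)).
Proof.
  intros Hk Hdelta Hx1 Hcont Hpos HK.
  destruct (Rle_lt_dec Rr delta) as [Hle|Hlt]; [exists 0; intros; lra|].
  destruct (continuity_ab_min J (lam * delta) (lam * Rr)) as [m [Hmin Hm]]; [nra| |].
  { intros c Hc. apply Hcont. nra. }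
  assert (HJm : 0 < J m) by (apply Hpos; nra).
  set (P := Rpower delta k). assert (HP : 0 < P) by apply Rpower_pos.
  exists (Rmax 0 K / (P * J m)). intros r Hr.
  assert (HPr : P <= Rpower r k) by (apply Rle_Rpower_l; lra).
  assert (HJr : J m <= J (lam * r)) by (apply Hmin; nra).
  apply Rle_trans with (Rmax 0 K); [eapply Rle_trans; [apply HK, Hr|apply Rmax_r]|].
  replace (Rmax 0 K) with (Rmax 0 K / (P * J m) * (P * J m)) at 1 by (field; nra).
  apply Rmult_le_compat_l.
  - apply Rmult_le_pos; [apply Rmax_l|]. apply Rlt_le, Rinv_0_lt_compat. nra.
  - apply Rmult_le_compat; lra.
Qed.

Lemma le_profile_piecewise (delta c1 c2 : R) :
  (forall r, 0 < r < Rr -> 0 < J (lam * r)) ->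
  (forall r, 0 < r < delta -> r <= Rr -> w r <= c1 * (Rpower r k * J (lam * r))) ->
  (forall r, delta <= r < Rr -> w r <= c2 * (Rpower r k * J (lam * r))) ->
  exists C, 0 < C /\ forall r, 0 < r < Rr -> w r <= C * (Rpower r k * J (lam * r)).
Proof.
  intros Hpos Hnear Haway. exists (1 + Rabs c1 + Rabs c2).
  split; [pose proof (Rabs_pos c1); pose proof (Rabs_pos c2); lra|]. intros r Hr.
  assert (Hphi : 0 < Rpower r k * J (lam * r)) by (apply Rmult_lt_0_compat; [apply Rpower_pos|auto]).
  pose proof (Rle_abs c1). pose proof (Rle_abs c2). pose proof (Rabs_pos c1). pose proof (Rabs_pos c2).
  destruct (Rlt_le_dec r delta) as [Hrd|Hrd].
  - pose proof (Hnear r (conj (proj1 Hr) Hrd) ltac:(lra)). nra.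
  - pose proof (Haway r (conj Hrd (proj2 Hr))). nra.
Qed.

End ProfileComparison.

Theorem mainTheorem10
  (n : nat) (Rr : R) (u0 u0r : R -> R) (lambda x1 : R) :
  (2 <= n)%nat ->
  0 < Rr ->
  Rr < sqrt (3 / 8 * (3 * INR n - 5) * (2 * INR n - 3) ^ 3) ->
  C1_profile Rr u0 u0r ->
  (forall r, 0 < r <= Rr -> ustar n r >= u0 r) ->
  (exists M delta, 0 < delta /\ forall r, 0 < r < delta -> r <= Rr ->
     Rabs (Rpower r (3/2 - INR n - nu n) * (ustar n r - u0 r)) <= M) ->
  u0 Rr = ustar n Rr ->
  (exists C, 0 < C /\ forall r, 0 < r < Rr ->
     0 >= u0r r /\ u0r r >= - C * Rpower r (- (2/3))) ->
  first_pos_root_deriv (BesselJ (nu n)) x1 ->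
  0 < lambda -> lambda * Rr < x1 ->
  exists C, 0 < C /\
    forall r, 0 < r < Rr ->
      u0 r >= ustar n r -
        C * exp (- lambda ^ 2 * 0) * Rpower r (INR n - 3/2) * BesselJ (nu n) (lambda * r).
Proof.
  intros Hn HR _ HC1 _ [M [d [Hd HM]]] Hbd [C6 [_ H6]] Hroot Hlam Hx1.
  set (J := BesselJ (nu n)). set (w := fun r => ustar n r - u0 r). set (k := INR n - 3 / 2).
  assert (Hk : 0 <= k) by (apply le_INR in Hn; simpl in Hn; unfold k; lra).
  pose proof (nu_pos n Hn) as Hnu.
  destruct (BesselJ_near0_bounds (nu n)) as [xs [a [b [Hxs [Ha [Hb HJ]]]]]]; [lra|].
  pose proof (pos_before_first_critical J (nu n) x1 xs a b Hnu Hxs Ha Hb HJ Hroot) as HJpos.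
  destruct (le_profile_near0 w J k (nu n) lambda Rr Hlam (3 / 2 - INR n - nu n) xs a M d)
    as [delta [c1 [Hdelta Hnear]]]; try (unfold k; ring); try assumption.
  { intros x Hx. apply HJ, Hx. }
  destruct (le_profile_away w J k lambda Rr Hlam x1 delta (- ustar n Rr)) as [c2 Haway];
    try assumption.
  { apply first_pos_root_deriv_continuity, Hroot. }
  { intros r Hr. apply (ustar_gap_le n Rr u0 u0r HC1); [|exact Hbd|lra].
    intros y Hy. destruct (H6 y Hy). lra. }
  destruct (le_profile_piecewise w J k lambda Rr delta c1 c2) as [C [HC Hle]]; try assumption.
  { intros r Hr. apply HJpos. nra. }
  exists C. split; [exact HC|]. intros r Hr.
  rewrite Rmult_0_r, exp_0, Rmult_1_r, Rmult_assoc. pose proof (Hle r Hr). unfold w in *. lra.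
Qed.
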